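(* Let $A$ and $B$ be disjoint graphs, $a\in V(A)$ with $N(a,A)=\{a_1,a_2,a_3\}$, $b\in V(B)$ with $N(b,B)=\{b_1,b_2,b_3\}$, and $G=Aa\sigma bB$ where $\sigma(a_i)=b_i$ for each $i$. Let $P$ be a $\Lambda$-factor of $G$, and let $P'$ be the subgraph of $P$ consisting of those components (3-vertex paths) of $P$ that contain at least one of the edges $a_1b_1,a_2b_2,a_3b_3$. (a1) If $v(A)\equiv 0\pmod 3$ (so $v(B)\equiv 2 \pmod 3$), then one of the following holds: (a1.1) $P'$ has exactly one component, and it has exactly two vertices in $A-a$, these being adjacent, and exactly one vertex in $B-b$; (a1.2) $P'$ has exactly two components, each having exactly one vertex in $A-a$ and exactly two vertices in $B-b$, these being adjacent; (a1.3) $P'$ has exactly three components $L_1,L_2,L_3$, where (up to renaming) $L_1$ has exactly one vertex in $A-a$ and exactly two adjacent vertices in $B-b$, and each of $L_2,L_3$ has exactly two adjacent vertices in $A-a$ and exactly one vertex in $B-b$. (a2) If $v(A)\equiv 1\pmod 3$ (so $v(B)\equiv 1\pmod 3$), then one of the following holds: (a2.1) $P'=\emptyset$; (a2.2) $P'$ has exactly two components $L_1,L_2$, where (up to renaming) $L_1$ has exactly one vertex in $A-a$ and exactly two adjacent vertices in $B-b$, and $L_2$ has exactly two adjacent vertices in $A-a$ and exactly one vertex in $B-b$; (a2.3) $P'$ has exactly three components $L_1,L_2,L_3$, and either each $L_i$ has exactly one vertex in $A-a$ and exactly two adjacent vertices in $B-b$, or each $L_i$ has exactly two adjacent vertices in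 $A-a$ and exactly one vertex in $B-b$.
   Context: Graphs are finite, undirected, without loops or multiple edges; $v(G)=|V(G)|$; $N(x,G)$ is the set of neighbours of $x$. For disjoint graphs $A,B$, vertices $a\in V(A)$, $b\in V(B)$ and a bijection $\sigma: N(a,A)\to N(b,B)$, $Aa\sigma bB$ is $(A-a)\cup(B-b)$ together with the new edges $\{x\sigma(x): x\in N(a,A)\}$. A $\Lambda$-factor of $G$ is a spanning subgraph each of whose components is a path on 3 vertices. *)

From mathcomp Require Import all_boot.
Set Implicit Arguments. Unset Strict Implicit. Unset Printing Implicit Defensive.

(* A finite simple graph on vertex type T (all elements of T are vertices). *)
Definition simple_graph (T : finType) (e : rel T) : Prop :=
  symmetric e /\ irreflexive e.

Definition nbhd (T : finType) (e : rel T) (x : T) : {set T} := [set y | e x y].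

(* A and B are made disjoint by taking the vertex
   type TA + TB; the vertex set is (A - a) u (B - b), and the edges are those
   of A - a, of B - b, and the new edges x sigma(x) for x in N(a, A). *)
Definition glue_vertices (TA TB : finType) (a : TA) (b : TB) : {set TA + TB} :=
  [set v | (v != inl a) && (v != inr b)].

Definition glue_rel (TA TB : finType) (eA : rel TA) (eB : rel TB)
    (a : TA) (b : TB) (sigma : TA -> TB) : rel (TA + TB) :=
  fun u v => match u, v with
  | inl x, inl y => [&& x != a, y != a & eA x y]
  | inr x, inr y => [&& x != b, y != b & eB x y]
  | inl x, inr y => eA a x && (sigma x == y)
  | inr y, inl x => eA a x && (sigma x == y)
  end.

(* A path on three vertices, given as an ordered triple (x, y, z) with
   edges xy and yz. *)
Definition p3_verts (T : finType) (t : T * T * T) : {set T} :=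
  [set t.1.1; t.1.2; t.2].

Definition p3_edge (T : finType) (t : T * T * T) (u v : T) : bool :=
  let: (x, y, z) := t in
  [|| (x == u) && (y == v), (y == u) && (x == v),
      (y == u) && (z == v) | (z == u) && (y == v)].

Definition is_p3 (T : finType) (e : rel T) (t : T * T * T) : bool :=
  let: (x, y, z) := t in [&& x != y, y != z, x != z, e x y & e y z].

(* A Lambda-factor of the graph (VG, e): a spanning subgraph whose components
   are 3-vertex paths, represented by the set of its components. *)
Definition Lambda_factor (T : finType) (VG : {set T}) (e : rel T)
    (P : {set T * T * T}) : Prop :=
  [/\ (forall t, t \in P -> is_p3 e t /\ p3_verts t \subset VG),
      (forall t1 t2, t1 \in P -> t2 \in P -> t1 != t2 ->
          [disjoint p3_verts t1 & p3_verts t2])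
    & (forall v, v \in VG -> exists2 t, t \in P & v \in p3_verts t)].

Definition is_left (TA TB : Type) (v : TA + TB) : bool :=
  if v is inl _ then true else false.

Definition twoA_oneB (TA TB : finType) (L : (TA + TB) * (TA + TB) * (TA + TB)) : Prop :=
  [/\ #|[set v in p3_verts L | is_left v]| = 2,
      #|[set v in p3_verts L | ~~ is_left v]| = 1
    & exists u v, [&& u \in p3_verts L, v \in p3_verts L, is_left u, is_left v
                    & p3_edge L u v]].

Definition oneA_twoB (TA TB : finType) (L : (TA + TB) * (TA + TB) * (TA + TB)) : Prop :=
  [/\ #|[set v in p3_verts L | is_left v]| = 1,
      #|[set v in p3_verts L | ~~ is_left v]| = 2
    & exists u v, [&& u \in p3_verts L, v \in p3_verts L, ~~ is_left u,
                    ~~ is_left v & p3_edge L u v]].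

From Pilot Require Import Defs.
From mathcomp Require Import all_boot zify.
Set Implicit Arguments. Unset Strict Implicit. Unset Printing Implicit Defensive.

(* Let nleft L be the number of vertices of a path L of P in A - a.  A path with
   nleft L = 1 or 2 has vertices on both sides, so it uses one of the new edges a_i b_i;
   it cannot alternate sides (A, B, A would force sigma to identify two neighbours of a,
   and B, A, B would give a vertex two images), so it has the shape required by
   oneA_twoB or twoA_oneB respectively.  The other paths have nleft L = 0 or 3.  Since the
   paths partition A - a, the numbers q and p of paths of P' of the two kinds satisfy
   q + 2p = v(A) - 1 (mod 3), and p + q <= 3 because distinct paths of P' contain
   distinct vertices a_i.  The cases listed in the theorem are the solutions. *)

Lemma card_set3_pred (T : finType) (p : pred T) (x y z : T) :
  uniq [:: x; y; z] -> #|[set v in [set x; y; z] | p v]| = p x + p y + p z.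
Proof.
move=> xyz_uniq.
have -> : [set v in [set x; y; z] | p v] = [set v in filter p [:: x; y; z]].
  by apply/setP => v; rewrite !inE mem_filter !inE andbC orbA.
rewrite cardsE (card_uniqP _) ?filter_uniq // size_filter /=.
by case: (p x); case: (p y); case: (p z).
Qed.

Lemma p3_edge_mem (T : finType) (L : T * T * T) u v : p3_edge L u v -> u \in p3_verts L.
Proof.
case: L => [[x y] z]; rewrite /p3_edge /p3_verts !inE.
by case/or4P => /andP[/eqP-> _]; rewrite eqxx ?orbT.
Qed.

Section LambdaFactor.

Variables (T : finType) (VG : {set T}) (e : rel T) (P : {set T * T * T}).
Hypothesis factorP : Lambda_factor VG e P.

Lemma card_p3_components_at u : #|[set L in P | u \in p3_verts L]| = (u \in VG).
Proof.
case: factorP => p3P disjP coverP.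
case: (boolP (u \in VG)) => [uV | uNV]; last first.
  apply/eqP; rewrite cards_eq0 -subset0; apply/subsetP => L; rewrite inE.
  by case/andP=> LP uL; rewrite (subsetP (p3P L LP).2) in uNV.
apply/eqP/cards1P; have [L LP uL] := coverP u uV; exists L; apply/setP => L'.
rewrite in_set in_set1; apply/andP/eqP => [[L'P uL'] | ->]; last by split.
have [// | L'L] := eqVneq L' L.
by rewrite (disjointFr (disjP _ _ L'P LP L'L) uL') in uL.
Qed.

Lemma sum_card_p3_verts (p : pred T) :
  \sum_(L in P) #|[set v in p3_verts L | p v]| = #|[set v in VG | p v]|.
Proof.
have vertsV L : L \in P -> p3_verts L \subset VG.
  by case: factorP => p3P _ _ /p3P[].
transitivity (\sum_(v | (v \in VG) && p v) \sum_(L | (L \in P) && (v \in p3_verts L)) 1).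
  rewrite (exchange_big_dep (mem P)) /=; last by move=> v L _ /andP[].
  apply: eq_bigr => L LP; rewrite sum1dep_card; apply: eq_card => v.
  rewrite [LHS]in_set [RHS]in_set LP /= andbC; case vL: (v \in p3_verts L); rewrite ?andbF //.
  by rewrite (subsetP (vertsV L LP)) //= andbT.
rewrite -[RHS]sum1dep_card; apply: eq_bigr => v /andP[vV _].
by rewrite sum1dep_card card_p3_components_at vV.
Qed.

Lemma card_p3_edges_le3 (u1 v1 u2 v2 u3 v3 : T) :
  #|[set L in P | [|| p3_edge L u1 v1, p3_edge L u2 v2 | p3_edge L u3 v3]]| <= 3.
Proof.
pose comp u := [set L in P | u \in p3_verts L].
have comp_le1 u : #|comp u| <= 1 by rewrite card_p3_components_at leq_b1.
have sub : [set L in P | [|| p3_edge L u1 v1, p3_edge L u2 v2 | p3_edge L u3 v3]]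
    \subset comp u1 :|: comp u2 :|: comp u3.
  apply/subsetP => L; rewrite inE => /andP[LP edgeL].
  have compL u : u \in p3_verts L -> L \in comp u by move=> uL; rewrite inE LP uL.
  by rewrite !in_setU; case/or3P: edgeL => /p3_edge_mem/compL->; rewrite ?orbT.
apply: leq_trans (subset_leq_card sub) _.
have u12_le2 : #|comp u1 :|: comp u2| <= 2.
  exact: leq_trans (leq_card_setU _ _).1 (leq_add (comp_le1 _) (comp_le1 _)).
exact: leq_trans (leq_card_setU _ _).1 (leq_add u12_le2 (comp_le1 _)).
Qed.

End LambdaFactor.

Section TwoTypes.

Variables (T : finType) (Q : {set T}) (k : T -> nat) (O W : T -> Prop).
Hypothesis typeQ : forall L, L \in Q -> (k L = 1 /\ O L) \/ (k L = 2 /\ W L).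
Hypothesis card_Q_le3 : #|Q| <= 3.

Let Q1 := Q :&: [set L | k L == 1].
Let Q2 := Q :\: [set L | k L == 1].

Let cardQ : #|Q1| + #|Q2| = #|Q|. Proof. exact: cardsID. Qed.

Let sumQ : \sum_(L in Q) k L = #|Q1| + 2 * #|Q2|.
Proof.
rewrite (big_setID [set L | k L == 1]) /= -!sum1_card mulnC big_distrl /=.
congr (_ + _); apply: eq_bigr => L; rewrite !inE => /andP[kL LQ].
  exact/eqP.
by case: (typeQ LQ) => [[/eqP] | [->]]; rewrite ?(negbTE kL).
Qed.

Let only_W : #|Q1| = 0 -> forall L, L \in Q -> W L.
Proof.
move/eqP; rewrite cards_eq0 => /eqP Q1_0 L LQ.
by case: (typeQ LQ) => [[kL _] | [_ //]]; have := in_set0 L; rewrite -Q1_0 !inE LQ kL.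
Qed.

Let only_O : #|Q2| = 0 -> forall L, L \in Q -> O L.
Proof.
move/eqP; rewrite cards_eq0 => /eqP Q2_0 L LQ.
by case: (typeQ LQ) => [[_ //] | [kL _]]; have := in_set0 L; rewrite -Q2_0 !inE LQ kL.
Qed.

Let unique_O : #|Q1| = 1 ->
  exists2 L1, L1 \in Q & O L1 /\ (forall L, L \in Q -> L != L1 -> W L).
Proof.
move/eqP/cards1P => [L1 Q1_L1].
have : L1 \in Q1 by rewrite Q1_L1 set11.
rewrite !inE => /andP[L1Q /eqP kL1]; exists L1 => //; split.
  by case: (typeQ L1Q) => -[kL]; rewrite kL1 in kL.
move=> L LQ LL1; case: (typeQ LQ) => [[kL _] | [_ //]].
have : L \in Q1 by rewrite !inE LQ kL.
by rewrite Q1_L1 inE (negbTE LL1).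
Qed.

Let some_W : 0 < #|Q2| -> exists2 L, L \in Q & W L.
Proof.
case/card_gt0P => L; rewrite !inE => /andP[kL LQ]; exists L => //.
by case: (typeQ LQ) => -[kL' //]; rewrite kL' in kL.
Qed.

Lemma two_types_sum_2_mod3 : \sum_(L in Q) k L = 2 %[mod 3] ->
  [\/ #|Q| = 1 /\ (forall L, L \in Q -> W L),
      #|Q| = 2 /\ (forall L, L \in Q -> O L)
    | #|Q| = 3 /\ exists2 L1, L1 \in Q & O L1 /\ (forall L, L \in Q -> L != L1 -> W L)].
Proof.
move: card_Q_le3; rewrite sumQ -cardQ => Q_le3 sum_mod.
have [[Q1_0 Q2_1] | [[Q1_2 Q2_0] | [Q1_1 Q2_2]]] :
  #|Q1| = 0 /\ #|Q2| = 1 \/ #|Q1| = 2 /\ #|Q2| = 0 \/ #|Q1| = 1 /\ #|Q2| = 2 by lia.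
- by constructor 1; rewrite Q1_0 Q2_1; split=> //; exact: only_W.
- by constructor 2; rewrite Q1_2 Q2_0; split=> //; exact: only_O.
- by constructor 3; rewrite Q1_1 Q2_2; split=> //; exact: unique_O.
Qed.

Lemma two_types_sum_0_mod3 : \sum_(L in Q) k L = 0 %[mod 3] ->
  [\/ Q = set0,
      #|Q| = 2 /\ exists L1 L2, [/\ L1 \in Q, L2 \in Q, O L1 & W L2]
    | #|Q| = 3 /\ ((forall L, L \in Q -> O L) \/ (forall L, L \in Q -> W L))].
Proof.
move: card_Q_le3; rewrite sumQ -cardQ => Q_le3 sum_mod.
have [[Q1_0 Q2_0] | [[Q1_1 Q2_1] | [[Q1_3 Q2_0] | [Q1_0 Q2_3]]]] :
  #|Q1| = 0 /\ #|Q2| = 0 \/ #|Q1| = 1 /\ #|Q2| = 1 \/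
  #|Q1| = 3 /\ #|Q2| = 0 \/ #|Q1| = 0 /\ #|Q2| = 3 by lia.
- by constructor 1; apply/eqP; rewrite -cards_eq0 -cardQ Q1_0 Q2_0.
- constructor 2; rewrite Q1_1 Q2_1; split=> //.
  have [L1 L1Q [OL1 _]] := unique_O Q1_1.
  have [L2 L2Q WL2] : exists2 L, L \in Q & W L by apply: some_W; rewrite Q2_1.
  by exists L1, L2.
- by constructor 3; rewrite Q1_3 Q2_0; split=> //; left; exact: only_O.
- by constructor 3; rewrite Q1_0 Q2_3; split=> //; right; exact: only_W.
Qed.

End TwoTypes.

Definition nleft (TA TB : finType) (L : (TA + TB) * (TA + TB) * (TA + TB)) : nat :=
  #|[set v in p3_verts L | Defs.is_left v]|.

Section GluedPaths.

Variables (TA TB : finType) (eA : rel TA) (eB : rel TB) (a : TA) (b : TB).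
Variable sigma : TA -> TB.
Local Notation e := (glue_rel eA eB a b sigma).

Lemma card_glue_left : #|[set v in glue_vertices a b | Defs.is_left v]| = #|TA|.-1.
Proof.
have -> : [set v in glue_vertices a b | Defs.is_left v] = inl @: [set~ a].
  apply/setP => -[x | y]; rewrite !inE /= -!sum_eqE /= ?andbT ?andbF.
    by rewrite (mem_imset _ _ (@inl_inj TA TB)) !inE.
  by apply/esym/imsetP => -[].
by rewrite card_imset ?cardsC1 //; exact: inl_inj.
Qed.

Lemma nleft_p3 (L : (TA + TB) * (TA + TB) * (TA + TB)) : is_p3 e L ->
  nleft L = Defs.is_left L.1.1 + Defs.is_left L.1.2 + Defs.is_left L.2.
Proof.
case: L => [[x y] z] /and5P[nxy nyz nxz _ _].
by rewrite /nleft card_set3_pred //= !inE negb_or nxy nxz nyz.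
Qed.

Lemma p3_edge_mixed L u w : is_p3 e L -> p3_edge L (inl u) (inr w) -> 0 < nleft L < 3.
Proof.
move=> Lp3; rewrite nleft_p3 //; case: L Lp3 => [[x y] z] _ /=.
by case/or4P => /andP[/eqP-> /eqP->] /=; case: (Defs.is_left _).
Qed.

Lemma glue_p3_cross L : is_p3 e L -> 0 < nleft L < 3 ->
  exists2 x, eA a x & p3_edge L (inl x) (inr (sigma x)).
Proof.
move=> Lp3; rewrite nleft_p3 //; move: Lp3.
case: L => [[[x|x] [y|y]] [z|z]] /and5P[_ _ _ exy eyz] //=.
all: first [case/andP: exy => ax /eqP <- | case/andP: eyz => ax /eqP <-].
all: by eexists; [exact: ax | rewrite /p3_edge !eqxx ?orbT].
Qed.

Section InjectiveOnNeighbours.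

Hypothesis sigma_inj : {in nbhd eA a &, injective sigma}.

Lemma glue_p3_types L : is_p3 e L ->
  [\/ nleft L = 0, nleft L = 3, nleft L = 1 /\ oneA_twoB L | nleft L = 2 /\ twoA_oneB L].
Proof.
case: L => [[x y] z] /[dup] Lp3 /and5P[nxy nyz nxz exy eyz].
have xyz : uniq [:: x; y; z] by rewrite /= !inE negb_or nxy nxz nyz.
rewrite /oneA_twoB /twoA_oneB /nleft /p3_verts /= !card_set3_pred //.
move: nxy nyz nxz exy eyz xyz {Lp3}.
case: x => x; case: y => y; case: z => z;
  rewrite /= -!sum_eqE /= => nxy nyz nxz exy eyz xyz.
all: try by [constructor 1 | constructor 2].
- constructor 4; split=> //; split=> //.
  by exists (inl x), (inl y); rewrite /= !inE !eqxx ?orbT.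
- case/andP: exy => ax /eqP sx; case/andP: eyz => az /eqP sz.
  by case/negP: nxz; apply/eqP/sigma_inj; rewrite ?inE // sx sz.
- constructor 3; split=> //; split=> //.
  by exists (inr y), (inr z); rewrite /= !inE !eqxx ?orbT.
- constructor 4; split=> //; split=> //.
  by exists (inl y), (inl z); rewrite /= !inE !eqxx ?orbT.
- by case/andP: exy => _ /eqP sx; case/andP: eyz => _ /eqP sz; rewrite -sx -sz eqxx in nxz.
- constructor 3; split=> //; split=> //.
  by exists (inr x), (inr y); rewrite /= !inE !eqxx ?orbT.
Qed.

End InjectiveOnNeighbours.

Section ThreeNeighbours.

Variables (a1 a2 a3 : TA) (b1 b2 b3 : TB).
Hypothesis nbhd_a : nbhd eA a = [set a1; a2; a3].
Hypothesis b_uniq : uniq [:: b1; b2; b3].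
Hypotheses (sigma1 : sigma a1 = b1) (sigma2 : sigma a2 = b2) (sigma3 : sigma a3 = b3).

Local Notation crossing L := [|| p3_edge L (inl a1) (inr b1), p3_edge L (inl a2) (inr b2)
                               | p3_edge L (inl a3) (inr b3)].

Lemma sigma_inj_nbhd : {in nbhd eA a &, injective sigma}.
Proof.
move: b_uniq; rewrite /= !inE negb_or => /and3P[/andP[b12 b13] b23 _].
move=> x y; rewrite nbhd_a !inE -!orbA => /or3P[] /eqP-> /or3P[] /eqP->;
  rewrite ?sigma1 ?sigma2 ?sigma3 // => b_eq.
all: by move: b12 b13 b23; rewrite b_eq eqxx.
Qed.

Lemma crossing_mixed L : is_p3 e L -> crossing L = (0 < nleft L < 3).
Proof.
move=> Lp3; apply/idP/idP; first by case/or3P; apply: p3_edge_mixed.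
case/(glue_p3_cross Lp3) => x ax; have : x \in nbhd eA a by rewrite inE.
rewrite nbhd_a !inE -orbA => /or3P[] /eqP->;
  by rewrite ?sigma1 ?sigma2 ?sigma3 => ->; rewrite ?orbT.
Qed.

Variable P : {set (TA + TB) * (TA + TB) * (TA + TB)}.
Hypothesis factorP : Lambda_factor (glue_vertices a b) e P.

Let p3P L : L \in P -> is_p3 e L.
Proof. by case: factorP => p3P _ _ /p3P[]. Qed.

Lemma crossing_types L : L \in [set L in P | crossing L] ->
  (nleft L = 1 /\ oneA_twoB L) \/ (nleft L = 2 /\ twoA_oneB L).
Proof.
rewrite inE => /andP[/p3P Lp3]; rewrite crossing_mixed //.
by case: (glue_p3_types sigma_inj_nbhd Lp3) => [-> | -> | | ]; auto.
Qed.

Lemma sum_nleft_crossing :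
  \sum_(L in [set L in P | crossing L]) nleft L = #|TA|.-1 %[mod 3].
Proof.
have := sum_card_p3_verts factorP (@Defs.is_left TA TB).
rewrite card_glue_left (bigID (fun L => crossing L)) /= => <-.
have /dvdnP[k ->] : 3 %| \sum_(L in P | ~~ crossing L) nleft L.
  apply: dvdn_sum => L /andP[LP]; rewrite crossing_mixed ?p3P //.
  by case: (glue_p3_types sigma_inj_nbhd (p3P LP)) => [-> | -> | [->] | [->]].
by rewrite addnC modnMDl; congr (_ %% 3); apply: eq_bigl => L; rewrite inE.
Qed.

End ThreeNeighbours.

End GluedPaths.

Theorem mainTheorem6 (TA TB : finType) (eA : rel TA) (eB : rel TB)
  (a a1 a2 a3 : TA) (b b1 b2 b3 : TB) (sigma : TA -> TB)
  (P : {set (TA + TB) * (TA + TB) * (TA + TB)}) :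
  simple_graph eA -> simple_graph eB ->
  uniq [:: a1; a2; a3] -> nbhd eA a = [set a1; a2; a3] ->
  uniq [:: b1; b2; b3] -> nbhd eB b = [set b1; b2; b3] ->
  sigma a1 = b1 -> sigma a2 = b2 -> sigma a3 = b3 ->
  Lambda_factor (glue_vertices a b) (glue_rel eA eB a b sigma) P ->
  let P' := [set L in P | [|| p3_edge L (inl a1) (inr b1),
                              p3_edge L (inl a2) (inr b2)
                            | p3_edge L (inl a3) (inr b3)]] in
  (#|TA| %% 3 = 0 ->
     [\/ #|P'| = 1 /\ (forall L, L \in P' -> twoA_oneB L),
         #|P'| = 2 /\ (forall L, L \in P' -> oneA_twoB L)
       | #|P'| = 3 /\ exists2 L1, L1 \in P' & oneA_twoB L1 /\
             (forall L, L \in P' -> L != L1 -> twoA_oneB L)]) /\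
  (#|TA| %% 3 = 1 ->
     [\/ P' = set0,
         #|P'| = 2 /\ exists L1 L2, [/\ L1 \in P', L2 \in P', oneA_twoB L1 & twoA_oneB L2]
       | #|P'| = 3 /\ ((forall L, L \in P' -> oneA_twoB L) \/
                        (forall L, L \in P' -> twoA_oneB L))]).
Proof.
move=> _ _ _ nbhd_a b_uniq _ sigma1 sigma2 sigma3 factorP P'.
have typesP' := crossing_types nbhd_a b_uniq sigma1 sigma2 sigma3 factorP.
have P'_le3 := card_p3_edges_le3 factorP (inl a1) (inr b1) (inl a2) (inr b2) (inl a3) (inr b3).
have sumP' := sum_nleft_crossing nbhd_a b_uniq sigma1 sigma2 sigma3 factorP.
have TA_gt0 : 0 < #|TA| by apply/card_gt0P; exists a.
split=> TA_mod.
- by apply: (two_types_sum_2_mod3 typesP' P'_le3); rewrite sumP'; lia.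
- by apply: (two_types_sum_0_mod3 typesP' P'_le3); rewrite sumP'; lia.
Qed.
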